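(* Let $p\ge 1$, let $\mathcal H$ be a finite set of hidden neurons with $H=|\mathcal H|$, and let $B\in\mathbb{R}^{p\times H}$ be the neuron/parameter incidence matrix described in the context. Let $g\in\mathbb{R}^p$ with $g_i>0$ for all $i$, and define $$F(u):=p\log\Big(\sum_{i=1}^p e^{(Bu)_i}g_i\Big)-\sum_{i=1}^p (Bu)_i,\qquad u\in\mathbb{R}^H.$$ Fix $u\in\mathbb{R}^H$ and a neuron $h$, and set $\rho_{i,h}:=e^{(Bu)_i-B_{ih}u_h}$ for $i=1,\dots,p$. Define $$\mathcal A:=|\mathrm{in}_h|-|\mathrm{out}_h|,\quad \mathcal B:=\sum_{i\in\mathrm{out}_h}\rho_{i,h}g_i,\quad \mathcal C:=\sum_{i\in\mathrm{in}_h}\rho_{i,h}g_i,\quad \mathcal D:=\sum_{i\in\mathrm{other}_h}\rho_{i,h}g_i.$$ Then the polynomial $\mathcal B(\mathcal A+p)X^2+\mathcal A\mathcal D X+\mathcal C(\mathcal A-p)$ has a unique positive root $r_h$, and the one-dimensional problem $\min_{u_h\in\mathbb{R}}F(u_1,\dots,u_h,\dots,u_H)$ (all other coordinates fixed) has a solution given by $u_h=\log(r_h)$.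
   Context: Let $\mathcal G=(V,E)$ be a finite directed acyclic graph. For $v\in V$, $\mathrm{ant}(v)=\{u:(u,v)\in E\}$, $\mathrm{suc}(v)=\{u:(v,u)\in E\}$. Input neurons are those with no antecedents, output neurons those with no successors, and hidden neurons $\mathcal H$ are the remaining ones. The parameter vector $\theta\in\mathbb{R}^p$ consists of one weight $\theta_{u\to v}$ per edge $(u,v)\in E$ and one bias $b_v$ per non-input neuron $v$, indexed in a fixed order. For a hidden neuron $h$: $\mathrm{in}_h$ is the set of indices of $b_h$ and of the weights $\theta_{u\to h}$, $u\in\mathrm{ant}(h)$; $\mathrm{out}_h$ is the set of indices of the weights $\theta_{h\to u}$, $u\in\mathrm{suc}(h)$; $\mathrm{other}_h=\{1,\dots,p\}\setminus(\mathrm{in}_h\cup\mathrm{out}_h)$. The matrix $B\in\mathbb{R}^{p\times H}$ has columns indexed by hidden neurons with $B_{ih}=-1$ if $i\in\mathrm{in}_h$, $B_{ih}=1$ if $i\in\mathrm{out}_h$, and $B_{ih}=0$ otherwise. (In the paper $g$ is the diagonal of $\partial\Phi(\theta)^\top\partial\Phi(\theta)$, with $\Phi$ the path-lifting, but the statement only uses $g>0$.) *)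

From HB Require Import structures.
From mathcomp Require Import all_boot all_order all_algebra.
From mathcomp Require Import all_classical all_reals all_analysis.
Set Implicit Arguments. Unset Strict Implicit. Unset Printing Implicit Defensive.
Import Order.TTheory GRing.Theory Num.Theory.
Local Open Scope ring_scope.

Section NN.
Variables (V : finType) (E : rel V).

Definition acyclic_graph : bool :=
  [forall x, ~~ [exists y, E x y && connect E y x]].

Definition is_input (v : V) : bool := [forall u, ~~ E u v].
Definition is_output (v : V) : bool := [forall u, ~~ E v u].
Definition is_hidden (v : V) : bool := ~~ is_input v && ~~ is_output v.

(* parameter indices: one weight per edge, one bias per non-input neuron *)
Definition edge_idx := {x : V * V | E x.1 x.2}.
Definition bias_idx := {v : V | ~~ is_input v}.
Definition param := (edge_idx + bias_idx)%type.

Definition hidden := {v : V | is_hidden v}.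

Definition in_idx (h : V) : pred param := fun i =>
  match i with
  | inl e => (val e).2 == h
  | inr b => val b == h
  end.
Definition out_idx (h : V) : pred param := fun i =>
  match i with
  | inl e => (val e).1 == h
  | inr _ => false
  end.
Definition other_idx (h : V) : pred param := fun i =>
  ~~ in_idx h i && ~~ out_idx h i.

Definition Bmat {R : pzRingType} (i : param) (h : hidden) : R :=
  if in_idx (val h) i then -1 else if out_idx (val h) i then 1 else 0.

Definition Bu {R : pzRingType} (u : hidden -> R) (i : param) : R :=
  \sum_(h : hidden) Bmat i h * u h.

Definition Fobj {R : realType} (g : param -> R) (u : hidden -> R) : R :=
  #|{: param}|%:R * ln (\sum_(i : param) expR (Bu u i) * g i)
  - \sum_(i : param) Bu u i.

Definition upd {R : Type} (u : hidden -> R) (h : hidden) (t : R) : hidden -> R :=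
  fun k => if k == h then t else u k.

Definition rho {R : realType} (u : hidden -> R) (h : hidden) (i : param) : R :=
  expR (Bu u i - Bmat i h * u h).

Definition coefA {R : pzRingType} (h : hidden) : R :=
  #|in_idx (val h)|%:R - #|out_idx (val h)|%:R.
Definition coefB {R : realType} (g : param -> R) (u : hidden -> R) (h : hidden) : R :=
  \sum_(i | out_idx (val h) i) rho u h i * g i.
Definition coefC {R : realType} (g : param -> R) (u : hidden -> R) (h : hidden) : R :=
  \sum_(i | in_idx (val h) i) rho u h i * g i.
Definition coefD {R : realType} (g : param -> R) (u : hidden -> R) (h : hidden) : R :=
  \sum_(i | other_idx (val h) i) rho u h i * g i.

Definition quad_poly {R : realType} (g : param -> R) (u : hidden -> R) (h : hidden)
  : {poly R} :=
  let p : R := #|{: param}|%:R in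
  (coefB g u h * (coefA h + p))%:P * 'X^2
  + (coefA h * coefD g u h)%:P * 'X
  + (coefC g u h * (coefA h - p))%:P.

End NN.

From Pilot Require Import Defs.
From HB Require Import structures.
From mathcomp Require Import all_boot all_order all_algebra.
From mathcomp Require Import all_classical all_reals all_analysis.
From mathcomp Require Import ring lra.
Import Order.TTheory GRing.Theory Num.Theory.
Local Open Scope ring_scope.
Set Implicit Arguments. Unset Strict Implicit.

(* Along coordinate [h], [F] is (up to a constant) the convex function
   [t |-> p ln (sum_i e^(B_ih t) w_i) - t sum_i B_ih] with [w_i = rho_ih g_i]:
   Jensen's inequality for [exp] shows that any critical point is a global
   minimiser.  As [B_ih] is [-1], [1], [0] on [in_h], [out_h], [other_h]
   (disjoint by acyclicity), the critical-point equation at [t = ln r],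
   multiplied by [r], is the quadratic [B (A + p) r^2 + A D r + C (A - p) = 0].
   A hidden neuron has a bias and an outgoing edge, so [B, C > 0] and
   [|A| < p]: the quadratic has a positive leading and a negative constant
   coefficient, hence exactly one positive root. *)

Lemma sumr_gt0_mem (R : numDomainType) (I : finType) (P : pred I) (F : I -> R)
    (i0 : I) :
  P i0 -> (forall i, P i -> 0 <= F i) -> 0 < F i0 -> 0 < \sum_(i | P i) F i.
Proof.
move=> Pi0 F_ge0 Fi0_gt0; rewrite (bigD1 i0) //=.
by apply: ltr_wpDr => //; apply: sumr_ge0 => i /andP[/F_ge0].
Qed.

Lemma quad_pos_root_uniq (R : realFieldType) (a b c r r' : R) :
  0 < a -> c < 0 -> 0 < r -> 0 < r' ->
  a * r ^+ 2 + b * r + c = 0 -> a * r' ^+ 2 + b * r' + c = 0 -> r' = r.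
Proof.
move=> a_gt0 c_lt0 r_gt0 r'_gt0 qr qr'.
have : (r' - r) * (a * (r' + r) + b) = 0 by rewrite -[0](subrr 0) -{1}qr' -qr; ring.
move/eqP; rewrite mulf_eq0 => /orP[/eqP|/eqP sum_roots]; first lra.
have prod_roots : a * r * r' = c.
  have -> : a * r * r' = c - (a * r ^+ 2 + b * r + c).
    by rewrite (_ : b = - (a * (r' + r))); [ring | lra].
  by rewrite qr subr0.
by have := mulr_gt0 (mulr_gt0 a_gt0 r_gt0) r'_gt0; lra.
Qed.

Lemma quad_pos_root_exists (R : rcfType) (a b c : R) :
  0 < a -> c < 0 -> exists2 r, 0 < r & a * r ^+ 2 + b * r + c = 0.
Proof.
move=> a_gt0 c_lt0.
pose s := Num.sqrt (b ^+ 2 - 4 * a * c).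
have s_ge0 : 0 <= s by apply: sqrtr_ge0.
have s2 : s ^+ 2 = b ^+ 2 - 4 * a * c by rewrite sqr_sqrtr //; nra.
have b_lt_s : b < s by nra.
exists ((s - b) / (2 * a)); first by rewrite divr_gt0 //; lra.
apply: (@mulIf _ (4 * a)); first by rewrite mulf_neq0 // lt0r_neq0.
rewrite mul0r.
have -> : (a * ((s - b) / (2 * a)) ^+ 2 + b * ((s - b) / (2 * a)) + c) * (4 * a)
    = s ^+ 2 - b ^+ 2 + 4 * a * c by field; exact: lt0r_neq0.
by rewrite s2; ring.
Qed.

Section LogSumExp.
Variable R : realType.

(* Jensen's inequality for [expR], from the tangent bound [1 + x <= expR x]
   taken at the weighted mean. *)
Lemma expR_mean_le (I : finType) (w x : I -> R) :
  (forall i, 0 <= w i) -> 0 < \sum_i w i ->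
  expR ((\sum_i w i * x i) / \sum_i w i) * \sum_i w i <= \sum_i w i * expR (x i).
Proof.
move=> w_ge0 W_gt0.
set W := \sum_i w i; set m := (\sum_i w i * x i) / W.
have -> : expR m * W = \sum_i expR m * (w i * (1 + (x i - m))).
  rewrite -mulr_sumr; congr (_ * _).
  rewrite (eq_bigr (fun i => w i + (w i * x i - m * w i))); last by move=> i _; ring.
  rewrite big_split /= sumrB -mulr_sumr -/W /m; field; exact: lt0r_neq0.
apply: ler_sum => i _.
have -> : expR (x i) = expR m * expR (x i - m) by rewrite -expRD; congr expR; ring.
rewrite mulrCA ler_wpM2l ?expR_ge0 // ler_wpM2l //; exact: expR_ge1Dx.
Qed.

Definition lse_obj (I : finType) (p : R) (b w : I -> R) (t : R) : R :=
  p * ln (\sum_i expR (b i * t) * w i) - t * \sum_i b i.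

Lemma lse_obj_min (I : finType) (p : R) (b w : I -> R) (T : R) :
  0 <= p -> (forall i, 0 <= w i) -> 0 < \sum_i expR (b i * T) * w i ->
  p * \sum_i b i * (expR (b i * T) * w i)
    = (\sum_i b i) * \sum_i expR (b i * T) * w i ->
  forall t, lse_obj p b w T <= lse_obj p b w t.
Proof.
move=> p_ge0 w_ge0 S_gt0 crit t; rewrite /lse_obj.
set v := fun i => expR (b i * T) * w i.
have v_ge0 i : 0 <= v i by rewrite mulr_ge0 ?expR_ge0.
set S := \sum_i v i in S_gt0 crit *.
set k := (t - T) * (\sum_i b i * v i) / S.
have St : \sum_i expR (b i * t) * w i = \sum_i v i * expR (b i * (t - T)).
  apply: eq_bigr => i _; rewrite /v mulrAC -expRD; congr (expR _ * _); ring.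
have lnSt : k + ln S <= ln (\sum_i expR (b i * t) * w i).
  have jensen := expR_mean_le (fun i => b i * (t - T)) v_ge0 S_gt0.
  rewrite -St (_ : (\sum_i v i * (b i * (t - T))) / S = k) in jensen; last first.
    by rewrite /k mulr_sumr; congr (_ * _); apply: eq_bigr => i _; ring.
  have kS_gt0 : 0 < expR k * S by rewrite mulr_gt0 ?expR_gt0.
  rewrite -[k]expRK -lnM ?posrE ?expR_gt0 // ler_ln ?posrE //.
  exact: lt_le_trans jensen.
have pk : p * k = (t - T) * \sum_i b i.
  have crit_v : p * \sum_i b i * v i = (\sum_i b i) * S by [].
  have -> : p * k = (t - T) * (p * \sum_i b i * v i) / S by rewrite /k; ring.
  rewrite crit_v; field; exact: lt0r_neq0.
have := ler_wpM2l p_ge0 lnSt; rewrite mulrDr pk; lra.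
Qed.

End LogSumExp.

Section Network.
Variables (R : realType) (V : finType) (E : rel V).
Hypothesis acyc : acyclic_graph E.
Variable g : param E -> R.
Hypothesis g_gt0 : forall i, 0 < g i.
Variables (u : hidden E -> R) (h : hidden E).

Local Notation p := (#|{: param E}|%:R : R).
Local Notation w := (fun i => rho u h i * g i).

Lemma Bu_upd (t : R) (i : param E) :
  Bu (upd u h t) i = (Bu u i - Bmat i h * u h) + Bmat i h * t.
Proof.
rewrite /Bu (bigD1 h) //= [in RHS](bigD1 h) //= /upd eqxx.
rewrite (eq_bigr (fun k => Bmat i k * u k)); first ring.
by move=> k /negbTE ->.
Qed.

(* A weight both entering and leaving [h] would be a self-loop. *)
Lemma in_idx_out_idxF (i : param E) : in_idx (val h) i -> out_idx (val h) i = false.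
Proof.
case: i => [[[x y] /= Exy]|b] //= /eqP y_h; apply/negbTE/negP => /eqP x_h.
move/forallP: acyc => /(_ (val h)) /negP; apply.
rewrite x_h y_h in Exy.
by apply/existsP; exists (val h); apply/andP; split; [exact: Exy | exact: connect0].
Qed.

Lemma sum_Bmat (f : R -> R) (F : param E -> R) :
  \sum_i f (Bmat i h) * F i =
    f (-1) * \sum_(i | in_idx (val h) i) F i
  + f 1 * \sum_(i | out_idx (val h) i) F i
  + f 0 * \sum_(i | other_idx (val h) i) F i.
Proof.
rewrite (bigID (in_idx (val h))) /= [X in _ + X](bigID (out_idx (val h))) /=.
rewrite addrA !mulr_sumr; congr (_ + _ + _); apply: eq_big => i //.
- by move=> in_i; rewrite /Bmat in_i.
- by case in_i: (in_idx (val h) i); rewrite /= ?(in_idx_out_idxF in_i).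
- by move=> /andP[/negbTE in_i out_i]; rewrite /Bmat in_i out_i.
- by move=> /andP[/negbTE in_i /negbTE out_i]; rewrite /Bmat in_i out_i.
Qed.

Lemma sum_Bmat_const : \sum_i Bmat i h = - coefA (R := R) h.
Proof.
have card_sum (P : pred (param E)) : \sum_(i | P i) 1 = #|P|%:R :> R.
  by rewrite (eq_bigl (fun i => i \in P)) // sumr_const.
have := sum_Bmat id (fun=> 1); rewrite (eq_bigr (fun i => Bmat i h)) => [->|i _].
  by rewrite !card_sum /coefA; ring.
by rewrite mulr1.
Qed.

(* [Defs.] qualification is needed: [coefB], [coefC], [coefD] are also lemma
   names in poly.v. *)
Lemma sum_expR_Bmat r : 0 < r ->
  \sum_i expR (Bmat i h * ln r) * w i
    = r^-1 * Defs.coefC g u h + r * Defs.coefB g u h + Defs.coefD g u h.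
Proof.
move=> r_gt0; rewrite (sum_Bmat (fun b => expR (b * ln r))) /=.
by rewrite mulN1r expRN mul1r mul0r expR0 mul1r lnK ?posrE.
Qed.

Lemma sum_Bmat_expR_Bmat r : 0 < r ->
  \sum_i Bmat i h * (expR (Bmat i h * ln r) * w i)
    = - (r^-1 * Defs.coefC g u h) + r * Defs.coefB g u h.
Proof.
move=> r_gt0.
rewrite (eq_bigr (fun i => Bmat i h * expR (Bmat i h * ln r) * w i)) => [|i _];
  last by rewrite !mulrA.
have /= -> := sum_Bmat (fun b => b * expR (b * ln r)) w.
by rewrite !mul0r !mulN1r expRN !mul1r lnK ?posrE // addr0 mulNr.
Qed.

Lemma Fobj_upd t :
  Fobj g (upd u h t) = lse_obj p (fun i => Bmat i h) w t
                       - \sum_i (Bu u i - Bmat i h * u h).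
Proof.
rewrite /Fobj /lse_obj.
have -> : \sum_i expR (Bu (upd u h t) i) * g i
          = \sum_i expR (Bmat i h * t) * w i.
  by apply: eq_bigr => i _; rewrite Bu_upd expRD /rho [RHS]mulrCA mulrA.
have -> : \sum_i Bu (upd u h t) i
          = \sum_i (Bu u i - Bmat i h * u h) + t * \sum_i Bmat i h.
  by rewrite mulr_sumr -big_split; apply: eq_bigr => i _; rewrite Bu_upd /= [t * _]mulrC.
ring.
Qed.

(* The derivative of [lse_obj] at [ln r], times [\sum_i expR (Bmat i h * ln r) * w i > 0],
   is the quadratic at [r] divided by [r]. *)
Lemma lse_crit_quad_poly r : 0 < r ->
  p * \sum_i Bmat i h * (expR (Bmat i h * ln r) * w i)
  - (\sum_i Bmat i h) * \sum_i expR (Bmat i h * ln r) * w i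
  = (quad_poly g u h).[r] / r.
Proof.
move=> r_gt0; rewrite sum_Bmat_expR_Bmat // sum_Bmat_const sum_expR_Bmat //.
rewrite /quad_poly !hornerE /=; field; exact: lt0r_neq0.
Qed.

Lemma exists_in_idx : exists i : param E, in_idx (val h) i.
Proof.
have /andP[h_noinput _] : is_hidden E (val h) := valP h.
by exists (inr (exist _ (val h) h_noinput)); rewrite /= eqxx.
Qed.

Lemma exists_out_idx : exists i : param E, out_idx (val h) i.
Proof.
have /andP[_ /forallPn[v /negPn Ehv]] : is_hidden E (val h) := valP h.
by exists (inl (exist _ (val h, v) Ehv)); rewrite /= eqxx.
Qed.

Lemma w_gt0 i : 0 < w i.
Proof. by rewrite mulr_gt0 ?expR_gt0. Qed.

Lemma coefB_gt0 : 0 < Defs.coefB g u h.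
Proof.
have [i out_i] := exists_out_idx.
by apply: sumr_gt0_mem out_i _ (w_gt0 i) => j _; exact/ltW/w_gt0.
Qed.

Lemma coefC_gt0 : 0 < Defs.coefC g u h.
Proof.
have [i in_i] := exists_in_idx.
by apply: sumr_gt0_mem in_i _ (w_gt0 i) => j _; exact/ltW/w_gt0.
Qed.

Lemma coefD_ge0 : 0 <= Defs.coefD g u h.
Proof. by apply: sumr_ge0 => i _; exact/ltW/w_gt0. Qed.

Lemma coefA_bounds : - p < coefA h < p.
Proof.
have card_ge1 (P : pred (param E)) : (exists i, P i) -> 1 <= #|P|%:R :> R.
  by move=> [i Pi]; rewrite ler1n; apply/card_gt0P; exists i.
have card_le (P : pred (param E)) : #|P|%:R <= p by rewrite ler_nat max_card.
have := card_ge1 _ exists_in_idx; have := card_ge1 _ exists_out_idx.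
have := card_le (in_idx (val h)); have := card_le (out_idx (val h)).
by rewrite /coefA => *; apply/andP; split; lra.
Qed.

End Network.

Theorem lemma4p1 (R : realType) (V : finType) (E : rel V)
  (acyc : acyclic_graph E)
  (g : param E -> R) (gpos : forall i, 0 < g i)
  (u : hidden E -> R) (h : hidden E) :
  exists r : R,
    [/\ 0 < r, root (quad_poly g u h) r,
        (forall r' : R, 0 < r' -> root (quad_poly g u h) r' -> r' = r)
      & forall t : R, Fobj g (upd u h (ln r)) <= Fobj g (upd u h t)].
Proof.
set p : R := #|{: param E}|%:R.
have /andP[A_gt A_lt] : - p < coefA h < p := coefA_bounds R h.
set a := Defs.coefB g u h * (coefA h + p).
set b := coefA h * Defs.coefD g u h.
set c := Defs.coefC g u h * (coefA h - p).
have a_gt0 : 0 < a by rewrite mulr_gt0 ?(coefB_gt0 gpos u h) //; lra.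
have c_lt0 : c < 0 by rewrite pmulr_rlt0 ?(coefC_gt0 gpos u h) //; lra.
have quad_polyE x : (quad_poly g u h).[x] = a * x ^+ 2 + b * x + c.
  by rewrite /quad_poly !hornerE.
have [r r_gt0 qr] := quad_pos_root_exists b a_gt0 c_lt0.
exists r; split => //.
- by rewrite /root quad_polyE qr.
- by move=> r' r'_gt0; rewrite /root quad_polyE => /eqP; apply: quad_pos_root_uniq.
move=> t; rewrite !Fobj_upd lerD2r; apply: lse_obj_min.
- exact: ler0n.
- by move=> i; apply/ltW/(w_gt0 gpos u h).
- rewrite sum_expR_Bmat //.
  have rV_gt0 : 0 < r^-1 by rewrite invr_gt0.
  have := mulr_gt0 rV_gt0 (coefC_gt0 gpos u h).
  have := mulr_gt0 r_gt0 (coefB_gt0 gpos u h).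
  have := coefD_ge0 gpos u h; lra.
- by apply/eqP; rewrite -subr_eq0 lse_crit_quad_poly // quad_polyE qr mul0r.
Qed.
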